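(* Let $\mathcal{M}=[0,1]^2\subset\mathbb{R}^2$ with the Euclidean metric, let $k\ge 2$ be an integer, and let $P\subset\mathcal{M}$ be any set of $k$ points. Then $$GR_P\ \ge\ \frac{2}{\sqrt{3}}-\frac{C}{\sqrt{k}},\qquad\text{where } C=\frac{2^{3/2}}{3^{3/4}}.$$
   Context: For a metric space $(\mathcal{M},\delta)$ and a finite set $P\subset\mathcal{M}$ with $|P|\ge 2$, define $r_P=\min_{p,q\in P,\,p\neq q}\delta(p,q)/2$, $R_P=\sup_{x\in\mathcal{M}}\min_{p\in P}\delta(x,p)$, and the gap ratio $GR_P=R_P/r_P$. *)

From mathcomp Require Import all_boot all_order all_algebra.
From mathcomp Require Import all_classical all_reals exp.
Set Implicit Arguments. Unset Strict Implicit. Unset Printing Implicit Defensive.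
Import Order.TTheory GRing.Theory Num.Theory.
Local Open Scope classical_set_scope.
Local Open Scope ring_scope.

Section GapRatio.
Variable R : realType.

Definition dist2 (x y : R * R) : R :=
  Num.sqrt ((x.1 - y.1) ^+ 2 + (x.2 - y.2) ^+ 2).

Definition unit_square : set (R * R) :=
  [set x | 0 <= x.1 <= 1 /\ 0 <= x.2 <= 1].

(* r_P = min_{p <> q in P} dist(p,q) / 2, where P = {p i | i < k}, p injective *)
Definition r_P (k : nat) (p : 'I_k -> R * R) : R :=
  inf [set d | exists i j : 'I_k, i != j /\ d = dist2 (p i) (p j) / 2].

Definition dist_to_P (k : nat) (p : 'I_k -> R * R) (x : R * R) : R :=
  inf [set d | exists i : 'I_k, d = dist2 x (p i)].

Definition R_P (k : nat) (p : 'I_k -> R * R) : R :=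
  sup [set d | exists x, unit_square x /\ d = dist_to_P p x].

Definition GR (k : nat) (p : 'I_k -> R * R) : R := R_P p / r_P p.
End GapRatio.

From mathcomp Require Import all_boot all_order all_algebra.
From mathcomp Require Import all_classical all_reals exp.
From mathcomp Require Import ring lra.
Set Implicit Arguments.
Unset Strict Implicit.
Unset Printing Implicit Defensive.
Import Order.TTheory GRing.Theory Num.Theory.
Local Open Scope ring_scope.

(* Let [a b] be a closest pair of [P], at distance [2 r].  The center [c] of an
   equilateral triangle erected on [a b] is at distance [2 r / sqrt 3] from [a]
   and [b], and every other point of [P], being at distance at least [2 r] from
   both [a] and [b], is at least as far from [c].  Of the two such centers (one
   on each side of [a b]) one lies in the unit square, so [R_P >= 2 r / sqrt 3]
   and [GR_P >= 2 / sqrt 3], which exceeds the stated bound. *)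

Section EuclideanPlane.
Variable R : realType.
Implicit Types (a b x : R * R) (s t : R).

Definition sqdist a b : R := (a.1 - b.1) ^+ 2 + (a.2 - b.2) ^+ 2.

Lemma sqdist_ge0 a b : 0 <= sqdist a b.
Proof. by rewrite /sqdist addr_ge0 ?sqr_ge0. Qed.

Lemma sqdist_eq0 a b : (sqdist a b == 0) = (a == b).
Proof.
case: a b => [a1 a2] [b1 b2].
by rewrite /sqdist paddr_eq0 ?sqr_ge0 // !sqrf_eq0 !subr_eq0 xpair_eqE.
Qed.

Lemma dist2E a b : dist2 a b = Num.sqrt (sqdist a b).
Proof. by []. Qed.

(* The midpoint of [a b] shifted by [s] times half of [b - a] rotated by a right
   angle; for [3 * s ^+ 2 = 1] this is the center of an equilateral triangle
   erected on [a b]. *)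
Definition apex s a b : R * R :=
  ((a.1 + b.1) / 2 - s * (b.2 - a.2) / 2, (a.2 + b.2) / 2 + s * (b.1 - a.1) / 2).

Lemma sqdist_apex_l s a b : sqdist (apex s a b) a = (1 + s ^+ 2) / 4 * sqdist a b.
Proof. by rewrite /sqdist /=; field. Qed.

Lemma sqdist_apex_r s a b : sqdist (apex s a b) b = (1 + s ^+ 2) / 4 * sqdist a b.
Proof. by rewrite /sqdist /=; field. Qed.

Lemma sqdist_apex_le s a b x : 3 * s ^+ 2 = 1 ->
  sqdist a b <= sqdist x a -> sqdist a b <= sqdist x b ->
  sqdist (apex s a b) a <= sqdist (apex s a b) x.
Proof.
move=> hs hxa hxb.
pose w1 := (b.1 - a.1) / 2; pose w2 := (b.2 - a.2) / 2.
pose z1 := x.1 - (a.1 + b.1) / 2; pose z2 := x.2 - (a.2 + b.2) / 2.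
pose W := w1 ^+ 2 + w2 ^+ 2; pose X := z1 ^+ 2 + z2 ^+ 2.
pose B := z2 * w1 - z1 * w2.
have eab : sqdist a b = 4 * W by rewrite /sqdist /W /w1 /w2; field.
have exa : sqdist x a = X + W + 2 * (z1 * w1 + z2 * w2).
  by rewrite /sqdist /X /W /z1 /z2 /w1 /w2; field.
have exb : sqdist x b = X + W - 2 * (z1 * w1 + z2 * w2).
  by rewrite /sqdist /X /W /z1 /z2 /w1 /w2; field.
have eca : sqdist (apex s a b) a = (1 + s ^+ 2) * W.
  by rewrite sqdist_apex_l eab; field.
have ecx : sqdist (apex s a b) x = X + s ^+ 2 * W - 2 * s * B.
  by rewrite /sqdist /= /X /W /B /z1 /z2 /w1 /w2; field.
(* [z] is the offset of [x] from the midpoint and [w] half of [b - a]; the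
   hypotheses give [3 W <= X - 2 |z.w|], and Lagrange's identity then bounds
   the cross term [B] by [(X - W) / 2 / |s|]. *)
have lagrange : B ^+ 2 + (z1 * w1 + z2 * w2) ^+ 2 = X * W by rewrite /B /X /W; ring.
have hW : 0 <= W by rewrite /W; nra.
rewrite eca ecx; rewrite eab exa in hxa; rewrite eab exb in hxb.
have h3W : 3 * W <= X by nra.
have hsB : 4 * (s * B) ^+ 2 <= (X - W) ^+ 2.
  have hs2 : s ^+ 2 = 3^-1 by lra.
  by rewrite exprMn hs2; nra.
nra.
Qed.

Lemma midpoint_pm_in01 {x y v : R} : 0 <= x <= 1 -> 0 <= y <= 1 ->
  `|v| <= `|y - x| / 2 ->
  0 <= (x + y) / 2 + v <= 1 /\ 0 <= (x + y) / 2 - v <= 1.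
Proof.
move=> /andP[x0 x1] /andP[y0 y1]; rewrite ler_norml => /andP[].
by have [yx|yx] := lerP x y => *; split; apply/andP; split; lra.
Qed.

Lemma midpoint_add_or_sub_in01 {x y v : R} : 0 <= x <= 1 -> 0 <= y <= 1 ->
  `|v| <= 2^-1 ->
  0 <= (x + y) / 2 + v <= 1 \/ 0 <= (x + y) / 2 - v <= 1.
Proof.
move=> /andP[x0 x1] /andP[y0 y1]; rewrite ler_norml => /andP[v0 v1].
have [hv|hv] := lerP 0 v; have [hm|hm] := lerP (x + y) 1;
  by [left; apply/andP; split; lra | right; apply/andP; split; lra].
Qed.

Lemma half_dist_in01_le {x y : R} : 0 <= x <= 1 -> 0 <= y <= 1 -> `|y - x| / 2 <= 2^-1.
Proof.
move=> /andP[x0 x1] /andP[y0 y1].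
have : `|y - x| <= 1 by rewrite ler_norml; apply/andP; split; lra.
lra.
Qed.

Lemma apex_in_square t a b : `|t| <= 1 -> unit_square a -> unit_square b ->
  unit_square (apex t a b) \/ unit_square (apex (- t) a b).
Proof.
move=> ht [a1 a2] [b1 b2]; rewrite /unit_square /apex /= !mulNr opprK.
set v1 := t * (b.1 - a.1) / 2; set v2 := t * (b.2 - a.2) / 2.
have shrink d : `|t * d / 2| <= `|d| / 2.
  rewrite -mulrA !normrM normfV normr_nat.
  by apply: ler_piMl => //; rewrite divr_ge0.
have [le21|/ltW le12] := lerP `|b.2 - a.2| `|b.1 - a.1|.
- have v2le : `|v2| <= `|b.1 - a.1| / 2.
    by apply: le_trans (shrink _) _; rewrite ler_pM2r ?invr_gt0.
  have [t1 nt1] := midpoint_pm_in01 a1 b1 v2le.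
  have [] := midpoint_add_or_sub_in01 a2 b2 (le_trans (shrink _) (half_dist_in01_le a1 b1)).
    by left.
  by right.
- have v1le : `|v1| <= `|b.2 - a.2| / 2.
    by apply: le_trans (shrink _) _; rewrite ler_pM2r ?invr_gt0.
  have [t2 nt2] := midpoint_pm_in01 a2 b2 v1le.
  have [] := midpoint_add_or_sub_in01 a1 b1 (le_trans (shrink _) (half_dist_in01_le a2 b2)).
    by right.
  by left.
Qed.

Lemma sqdist_square_le2 x y : unit_square x -> unit_square y -> sqdist x y <= 2.
Proof.
move=> [/andP[? ?] /andP[? ?]] [/andP[? ?] /andP[? ?]]; rewrite /sqdist; nra.
Qed.

Lemma exists_apex_in_square a b : unit_square a -> unit_square b ->
  exists s, 3 * s ^+ 2 = 1 /\ unit_square (apex s a b).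
Proof.
move=> ha hb; pose t : R := (Num.sqrt 3)^-1.
have t2 : 3 * t ^+ 2 = 1 by rewrite /t exprVn sqr_sqrtr // divff // pnatr_eq0.
have t1 : `|t| <= 1.
  rewrite /t ger0_norm ?invr_ge0 ?sqrtr_ge0 // invf_le1 ?sqrtr_gt0 //.
  by rewrite -{1}sqrtr1 ler_sqrt // ler1n.
have [hin|hin] := apex_in_square t1 ha hb; first by exists t.
by exists (- t); rewrite sqrrN.
Qed.

Lemma dist2_apex_l s a b : 3 * s ^+ 2 = 1 ->
  dist2 (apex s a b) a = dist2 a b / Num.sqrt 3.
Proof.
move=> hs; rewrite !dist2E sqdist_apex_l.
have -> : (1 + s ^+ 2) / 4 = 3^-1 by lra.
by rewrite sqrtrM ?invr_ge0 // sqrtrV // mulrC.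
Qed.
End EuclideanPlane.

Lemma inf_attained (R : realType) (S : set R) x : S x -> lbound S x -> inf S = x.
Proof.
move=> Sx lbx; apply/eqP; rewrite eq_le lb_le_inf ?andbT //; last by exists x.
by apply: ge_inf => //; exists x.
Qed.

Section GapRatioBounds.
Variables (R : realType) (k : nat) (p : 'I_k -> R * R).

Lemma ler_dist2 (x y u v : R * R) :
  (dist2 x y <= dist2 u v) = (sqdist x y <= sqdist u v).
Proof. by rewrite !dist2E ler_sqrt ?sqdist_ge0. Qed.

Definition closest_pair (a b : 'I_k) :=
  a != b /\ forall i j, i != j -> dist2 (p a) (p b) <= dist2 (p i) (p j).

Lemma exists_closest_pair : (1 < k)%N -> exists a b, closest_pair a b.
Proof.
move=> k_gt1; pose i0 : 'I_k := Ordinal (ltnW k_gt1); pose i1 : 'I_k := Ordinal k_gt1.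
pose distinct (ij : 'I_k * 'I_k) := ij.1 != ij.2.
have distinct01 : distinct (i0, i1) by [].
case: (arg_minP (fun ij => dist2 (p ij.1) (p ij.2)) distinct01) => -[a b] ab min_ab.
by exists a, b; split => // i j ij; exact: (min_ab (i, j)).
Qed.

Lemma r_P_closest a b : closest_pair a b -> r_P p = dist2 (p a) (p b) / 2.
Proof.
move=> [ab min_ab]; apply: inf_attained; first by exists a, b.
by move=> _ [i [j [ij ->]]]; rewrite ler_pM2r ?invr_gt0 ?min_ab.
Qed.

Lemma dist_to_P_le x i : dist_to_P p x <= dist2 x (p i).
Proof. by apply: ge_inf; [exists 0 => _ [j ->]; exact: sqrtr_ge0 | exists i]. Qed.

Lemma dist_to_P_nearest x i :
  (forall j, dist2 x (p i) <= dist2 x (p j)) -> dist_to_P p x = dist2 x (p i).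
Proof. by move=> near_i; apply: inf_attained; [exists i | move=> _ [j ->]]. Qed.

Hypothesis p_in : forall i, unit_square (p i).

Lemma dist_to_P_le_R_P x : (0 < k)%N -> unit_square x -> dist_to_P p x <= R_P p.
Proof.
move=> k_gt0 hx; apply: sup_upper_bound; last by exists x.
split; first by exists (dist_to_P p x), x.
exists (Num.sqrt 2) => _ [y [hy ->]].
apply: le_trans (dist_to_P_le y (Ordinal k_gt0)) _.
by rewrite dist2E ler_wsqrtr ?sqdist_square_le2.
Qed.

Lemma apex_nearest a b s l : closest_pair a b -> 3 * s ^+ 2 = 1 ->
  dist2 (apex s (p a) (p b)) (p a) <= dist2 (apex s (p a) (p b)) (p l).
Proof.
move=> [ab min_ab] hs; rewrite ler_dist2.
have [->|la] := eqVneq l a; first exact: lexx.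
have [->|lb] := eqVneq l b; first by rewrite sqdist_apex_l sqdist_apex_r.
by apply: sqdist_apex_le; rewrite // -ler_dist2 min_ab // eq_sym.
Qed.

Lemma two_div_sqrt3_le_GR : (1 < k)%N -> injective p -> 2 / Num.sqrt 3 <= GR p.
Proof.
move=> k_gt1 p_inj; have [a [b closest_ab]] := exists_closest_pair k_gt1.
have [s [hs c_in]] := exists_apex_in_square (p_in a) (p_in b).
set c := apex s (p a) (p b) in c_in.
have dab_gt0 : 0 < dist2 (p a) (p b).
  rewrite dist2E sqrtr_gt0 lt_def sqdist_ge0 sqdist_eq0 andbT.
  by apply: contra closest_ab.1 => /eqP/p_inj->.
have := dist_to_P_le_R_P (ltnW k_gt1) c_in.
rewrite (dist_to_P_nearest (i := a)) => [dca_le|j]; last exact: apex_nearest.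
rewrite /GR (r_P_closest closest_ab) ler_pdivlMr ?divr_gt0 //.
suff -> : 2 / Num.sqrt 3 * (dist2 (p a) (p b) / 2) = dist2 c (p a) by [].
by rewrite /c dist2_apex_l //; field; rewrite sqrtr_eq0 -ltNge.
Qed.
End GapRatioBounds.

Theorem lemma2 (R : realType) (k : nat) (hk : (2 <= k)%N)
  (p : 'I_k -> R * R) (p_inj : injective p)
  (p_in : forall i, unit_square (p i)) :
  GR p >= 2 / Num.sqrt 3
          - (2 `^ (3 / 2) / 3 `^ (3 / 4)) / Num.sqrt (k%:R).
Proof.
apply: le_trans (two_div_sqrt3_le_GR p_in hk p_inj).
by rewrite gerBl divr_ge0 ?sqrtr_ge0 // divr_ge0 ?powR_ge0.
Qed.
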